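(* Let $a,c$ be positive integers and $\vec k=(a,1,c)$. Then $\mathrm{depth}(\pi)=\mathrm{bounce}(\pi)$ for every $\pi\in\mathcal D_{\vec k}$, and hence $$\sum_{\pi\in\mathcal D_{\vec k}}q^{\mathrm{area}(\pi)}t^{\mathrm{depth}(\pi)}=\sum_{\pi\in\mathcal D_{\vec k}}q^{\mathrm{area}(\pi)}t^{\mathrm{bounce}(\pi)}.$$
   Context: For $\vec k=(k_1,\dots,k_\ell)$ put $|\vec k|=\sum k_i$, $N=|\vec k|+\ell$. A $\vec k$-Dyck path is a word $\pi=\pi_1\cdots\pi_N$ containing the letters $S^{k_1},\dots,S^{k_\ell}$ exactly once each and in this order, together with $|\vec k|$ letters $W$, such that all starting ranks are nonnegative, where $r_1=0$, $r_{i+1}=r_i+k_j$ if $\pi_i=S^{k_j}$ and $r_{i+1}=r_i-1$ if $\pi_i=W$. $\mathcal D_{\vec k}$ is the set of such paths. $\mathrm{area}(\pi)=\sum_j a_j$ where $a_j$ is the starting rank of $S^{k_j}$. Filling algorithms: in a tableau of $\ell$ top-justified columns, column $i$ having $k_i+1$ cells, place $1$ at the top of column 1; for $i=2,\dots,N$, call an entry active if it is currently the bottom entry of a column $i'$ not yet containing $k_{i'}+1$ entries; if $\pi_i=W$ place $i$ immediately below the smallest active entry (algorithm $\eta$) resp. the largest active entry (algorithm $\eta_*$); otherwise place $i$ at the top of the first empty column. Ranking: for a filled tableau $F$, column 1 gets ranks $0,\dots,k_1$ top to bottom; for $i\ge2$, if the top entry of column $i$ of $F$ is $A+1$ and $A$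 has rank $\alpha$, column $i$ gets ranks $\alpha,\dots,\alpha+k_i$ top to bottom. $\mathrm{bounce}(\pi)$ is the sum of the first-row ranks for $F=\eta(\pi)$, and $\mathrm{depth}(\pi)$ is the sum of the first-row ranks for $F=\eta_*(\pi)$. *)

From mathcomp Require Import all_boot all_order all_algebra.
Set Implicit Arguments. Unset Strict Implicit. Unset Printing Implicit Defensive.
Import GRing.Theory Num.Theory.

(* A word over the alphabet {W} U {S^{k_j}} is a seq (option nat):
   None = W, Some j = S^{k_j} (j is 0-indexed, so Some 0 = S^{k_1}).
   A vector k = (k_1,...,k_l) is a seq nat. *)

Definition letter := option nat.

Definition sizek (k : seq nat) : nat := sumn k.
Definition Nk (k : seq nat) : nat := sumn k + size k.

Definition rstep (k : seq nat) (x : letter) : int :=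
  match x with None => (-1)%R | Some j => (nth 0 k j)%:Z end.

(* starting rank of the letter at 0-indexed position i (i.e. r_{i+1}) *)
Definition start_rank (k : seq nat) (w : seq letter) (i : nat) : int :=
  foldr (fun x acc => (rstep k x + acc)%R) 0%R (take i w).

(* k-Dyck path: the S letters are S^{k_1},...,S^{k_l}, each exactly once
   and in this order; exactly |k| letters W; all starting ranks >= 0. *)
Definition is_dyck (k : seq nat) (w : seq letter) : bool :=
  [&& pmap id w == iota 0 (size k),
      count (pred1 None) w == sizek k &
      all (fun i => (0 <= start_rank k w i)%R) (iota 0 (size w))].

Definition area (k : seq nat) (w : seq letter) : nat :=
  sumn [seq absz (start_rank k w i) | i <- iota 0 (size w) & nth None w i != None].

(* The set D_k, as a duplicate-free list, obtained by enumerating words of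
   length N over the finite alphabet {W} U {S^{k_j} : j < l}. *)
Definition word_of (k : seq nat) (t : (Nk k).-tuple (option 'I_(size k)))
  : seq letter := map (omap (@nat_of_ord _)) t.

Definition Dyck_words (k : seq nat) : seq (seq letter) :=
  [seq word_of t | t <- enum {: (Nk k).-tuple (option 'I_(size k))}
                 & is_dyck k (word_of t)].

(* A tableau is a seq of l columns, each column listed top to bottom. *)
Definition tableau := seq (seq nat).

(* column j is active: nonempty and not yet containing k_j + 1 entries;
   its active entry is its bottom entry *)
Definition active (k : seq nat) (F : tableau) (j : nat) : bool :=
  (0 < size (nth [::] F j)) && (size (nth [::] F j) < (nth 0 k j).+1).

Definition bottom (F : tableau) (j : nat) : nat := last 0 (nth [::] F j).

Definition best_col (better : nat -> nat -> bool) (F : tableau) (js : seq nat)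
  : option nat :=
  foldl (fun acc j => match acc with
                      | None => Some j
                      | Some j' => if better (bottom F j) (bottom F j')
                                   then Some j else Some j'
                      end) None js.

(* one step: place entry i according to letter x.
   largest = false : algorithm eta (smallest active entry)
   largest = true  : algorithm eta_* (largest active entry) *)
Definition fill_step (largest : bool) (k : seq nat) (F : tableau)
  (i : nat) (x : letter) : tableau :=
  match x with
  | None =>
      let better := if largest then (fun u v => v < u) else (fun u v => u < v) in
      match best_col better F [seq j <- iota 0 (size k) | active k F j] with
      | Some j => set_nth [::] F j (rcons (nth [::] F j) i)
      | None => F
      end
  | Some _ =>
      let j := find (fun c : seq nat => size c == 0) F in
      set_nth [::] F j [:: i]
  end.

(* 1 at the top of column 1; then letters pi_2 ... pi_N placed as i = 2..N *)
Definition fill (largest : bool) (k : seq nat) (w : seq letter) : tableau :=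
  let F0 := set_nth [::] (nseq (size k) [::]) 0 [:: 1] in
  foldl (fun F ix => fill_step largest k F ix.1 ix.2) F0
        (zip (iota 2 (size w).-1) (behead w)).

(* first-row ranks of the columns, computed column by column:
   column 1 gets 0; column j (top entry A+1, A of rank alpha) gets alpha,
   where the rank of A, located in column j' at (0-indexed) height p,
   is (first-row rank of column j') + p. *)
Definition top_ranks (F : tableau) : seq nat :=
  foldl (fun rs j =>
           if j == 0 then rcons rs 0 else
           let A := (head 0 (nth [::] F j)).-1 in
           let j' := find (fun c : seq nat => A \in c) F in
           rcons rs (nth 0 rs j' + index A (nth [::] F j')))
        [::] (iota 0 (size F)).

Definition bounce (k : seq nat) (w : seq letter) : nat :=
  sumn (top_ranks (fill false k w)).

Definition depth (k : seq nat) (w : seq letter) : nat :=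
  sumn (top_ranks (fill true k w)).

From mathcomp Require Import all_boot all_order all_algebra.
From mathcomp Require Import zify.

Set Implicit Arguments.
Unset Strict Implicit.
Unset Printing Implicit Defensive.

(* A path in D_(a,1,c) is S^a W^m1 S^1 W^m2 S^c W^m3 with m1 <= a and m1 + m2 <= a + 1,
   and the fillings receive its letters as entries 1, ..., N.  Column 1 starts with
   1, ..., m1 + 1, so column 2 (topped by m1 + 2) has rank m1, and column 3 has the rank
   of the entry m1 + m2 + 2; the W's after S^c only append larger entries, which changes
   no rank.  Of the m2 W's after S^1, eta puts the first in column 1 and the second in
   column 2, eta_* puts the first in column 2 (as does eta when column 1 is full); then
   column 2 is full and the rest go to column 1.  Either way the j-th of them gets rank
   m1 + max(1, j - 1), so depth and bounce agree. *)

Lemma index_iota m n i : m <= i < m + n -> index i (iota m n) = i - m.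
Proof.
case/andP=> le_mi lt_in; rewrite -{1}(subnKC le_mi).
have lt_im_n : i - m < n by lia.
by rewrite -(nth_iota 0 m lt_im_n) index_uniq ?size_iota ?iota_uniq.
Qed.

Lemma last_iota x m n : last x (iota m n.+1) = m + n.
Proof. by rewrite -addn1 iotaD last_cat. Qed.

Lemma pmap_id_nil (T : Type) (w : seq (option T)) :
  pmap id w = [::] -> w = nseq (size w) None.
Proof. by elim: w => [|[x|] w IH] //= /IH {1}->. Qed.

Lemma pmap_id_cons (T : Type) (w : seq (option T)) x s :
  pmap id w = x :: s ->
  exists n w', w = nseq n None ++ Some x :: w' /\ pmap id w' = s.
Proof.
elim: w => [|[y|] w IH] //=; first by case=> -> <-; exists 0, w.
by move/IH => [n [w' [-> <-]]]; exists n.+1, w'.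
Qed.

Lemma mem_Dyck_words k w : w \in Dyck_words k -> is_dyck k w.
Proof. by case/mapP => t; rewrite mem_filter => /andP[? _] ->. Qed.

Lemma start_rank_cat k p q :
  start_rank k (p ++ q) (size p) = (\sum_(x <- p) rstep k x)%R.
Proof.
rewrite /start_rank take_size_cat //.
by elim: p => [|x p IH]; rewrite ?big_nil ?big_cons //= IH.
Qed.

Lemma sum_rstep_nseqW k n : (\sum_(x <- nseq n None) rstep k x = - n%:Z)%R.
Proof. by elim: n => [|n IH]; rewrite ?big_nil //= big_cons IH /=; lia. Qed.

Definition fill_run (largest : bool) (k : seq nat) (F : tableau) (s : nat)
    (w : seq letter) : tableau :=
  foldl (fun F ix => fill_step largest k F ix.1 ix.2) F (zip (iota s (size w)) w).

Section FillRun.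
Variables (largest : bool) (k : seq nat).

Lemma fill_run_cons F s x w :
  fill_run largest k F s (x :: w) = fill_run largest k (fill_step largest k F s x) s.+1 w.
Proof. by []. Qed.

Lemma fill_run_nseqW F s n :
  fill_run largest k F s (nseq n.+1 None) =
  fill_run largest k (fill_step largest k F s None) s.+1 (nseq n None).
Proof. by []. Qed.

Lemma fill_run_cat F s w1 w2 :
  fill_run largest k F s (w1 ++ w2) =
  fill_run largest k (fill_run largest k F s w1) (s + size w1) w2.
Proof.
elim: w1 F s => [|x w1 IH] F s; first by rewrite addn0.
by rewrite cat_cons !fill_run_cons IH addSnnS.
Qed.

Lemma fillE x w :
  fill largest k (x :: w) =
  fill_run largest k (set_nth [::] (nseq (size k) [::]) 0 [:: 1]) 2 w.
Proof. by []. Qed.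

End FillRun.

Lemma best_col_mem better F js j : best_col better F js = Some j -> j \in js.
Proof.
rewrite /best_col; set step := fun acc j => _.
suff gen acc : foldl step acc js = Some j -> acc = Some j \/ j \in js by case/gen.
elim: js acc => [|x js IH] acc /=; first by left.
case/IH => [|js_j]; last by right; rewrite inE js_j orbT.
rewrite /step; case: acc => [y|] /=; last by case=> ->; right; exact: mem_head.
by case: ifP => _ [->]; [right; exact: mem_head | left].
Qed.

Definition preferred (largest : bool) (u v : nat) : bool :=
  if largest then v < u else u < v.

Section ThreeColumns.
Variables (largest : bool) (k : seq nat).
Hypothesis size_k : size k = 3.

Lemma fill_step_W_col0 C0 C1 C2 i :
  active k [:: C0; C1; C2] 0 -> ~~ active k [:: C0; C1; C2] 2 ->
  (active k [:: C0; C1; C2] 1 ==> ~~ preferred largest (last 0 C1) (last 0 C0)) ->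
  fill_step largest k [:: C0; C1; C2] i None = [:: rcons C0 i; C1; C2].
Proof.
rewrite /fill_step size_k /= => -> /negbTE ->.
case: (active _ _ 1) => //= not_pref.
by rewrite /best_col /bottom /=; case: largest not_pref => /= /negbTE ->.
Qed.

Lemma fill_step_W_col1 C0 C1 C2 i :
  active k [:: C0; C1; C2] 1 -> ~~ active k [:: C0; C1; C2] 2 ->
  (active k [:: C0; C1; C2] 0 ==> preferred largest (last 0 C1) (last 0 C0)) ->
  fill_step largest k [:: C0; C1; C2] i None = [:: C0; rcons C1 i; C2].
Proof.
rewrite /fill_step size_k /= => -> /negbTE ->.
case: (active _ _ 0) => //= pref.
by rewrite /best_col /bottom /=; case: largest pref => /= ->.
Qed.

Lemma fill_run_W_col0 C0 C1 s n :
  ~~ active k [:: C0; C1; [::]] 1 -> C0 != [::] -> size C0 + n <= (nth 0 k 0).+1 ->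
  fill_run largest k [:: C0; C1; [::]] s (nseq n None) = [:: C0 ++ iota s n; C1; [::]].
Proof.
elim: n C0 s => [|n IH] C0 s inactive1 C0_nil size_C0; first by rewrite cats0.
rewrite fill_run_nseqW fill_step_W_col0 //; last by rewrite (negbTE inactive1).
  by rewrite IH ?size_rcons -?cats1 -?catA //; [case: (C0) | lia].
by rewrite /active /= lt0n size_eq0 C0_nil /=; lia.
Qed.

Lemma fill_step_W_extends C0 C1 C2 i : exists e0 e1 e2,
  fill_step largest k [:: C0; C1; C2] i None = [:: C0 ++ e0; C1 ++ e1; C2 ++ e2]
  /\ all (leq i) (e0 ++ e1 ++ e2).
Proof.
rewrite /fill_step; case E: best_col => [j|]; last first.
  by exists [::], [::], [::]; rewrite !cats0.
move/best_col_mem: E; rewrite mem_filter mem_iota size_k => /andP[_].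
case: j => [|[|[|j]]] // _ /=; rewrite -cats1.
- by exists [:: i], [::], [::]; rewrite !cats0 /= leqnn.
- by exists [::], [:: i], [::]; rewrite !cats0 /= leqnn.
- by exists [::], [::], [:: i]; rewrite !cats0 /= leqnn.
Qed.

Lemma fill_run_W_extends C0 C1 C2 s n : exists e0 e1 e2,
  fill_run largest k [:: C0; C1; C2] s (nseq n None) = [:: C0 ++ e0; C1 ++ e1; C2 ++ e2]
  /\ all (leq s) (e0 ++ e1 ++ e2).
Proof.
elim: n s C0 C1 C2 => [|n IH] s C0 C1 C2.
  by exists [::], [::], [::]; rewrite !cats0.
rewrite fill_run_nseqW.
have [e0 [e1 [e2 [-> le_e]]]] := fill_step_W_extends C0 C1 C2 s.
have [f0 [f1 [f2 [-> le_f]]]] := IH s.+1 (C0 ++ e0) (C1 ++ e1) (C2 ++ e2).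
exists (e0 ++ f0), (e1 ++ f1), (e2 ++ f2); rewrite !catA; split=> //.
move: le_e le_f; rewrite !all_cat => /and3P[-> -> ->] /and3P[f0_ge f1_ge f2_ge].
by rewrite !(sub_all _ f0_ge, sub_all _ f1_ge, sub_all _ f2_ge) // => z /ltnW.
Qed.

Lemma fill_step_S_col1 C0 C2 i x :
  C0 != [::] -> fill_step largest k [:: C0; [::]; C2] i (Some x) = [:: C0; [:: i]; C2].
Proof. by case: C0. Qed.

Lemma fill_step_S_col2 C0 C1 i x :
  C0 != [::] -> C1 != [::] ->
  fill_step largest k [:: C0; C1; [::]] i (Some x) = [:: C0; C1; [:: i]].
Proof. by case: C0 => // ? ?; case: C1. Qed.

End ThreeColumns.

(* Valid when the entry one less than the top of column 2 lies in column 1. *)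
Definition entry_rank (C0 C1 : seq nat) (x : nat) : nat :=
  if x \in C0 then index x C0 else index (head 0 C1).-1 C0 + index x C1.

Lemma entry_rank_above m1 D0 D1 x : m1.+1 < x ->
  entry_rank (iota 1 m1.+1 ++ D0) (m1.+2 :: D1) x =
  if x \in D0 then m1.+1 + index x D0 else m1 + index x (m1.+2 :: D1).
Proof.
move=> lt_m1_x; have x_iota : x \in iota 1 m1.+1 = false by rewrite mem_iota; lia.
have m1_iota : m1.+1 \in iota 1 m1.+1 by rewrite mem_iota; lia.
rewrite /entry_rank !mem_cat !index_cat x_iota m1_iota size_iota.
rewrite index_iota /=; last by lia.
by rewrite subn1.
Qed.

Lemma sumn_top_ranks3 C0 x C1 y e0 e1 e2 :
  x \in C0 -> y \in C0 ++ x.+1 :: C1 -> y \notin e0 ->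
  sumn (top_ranks [:: C0 ++ e0; x.+1 :: C1 ++ e1; y.+1 :: e2]) =
  index x C0 + entry_rank C0 (x.+1 :: C1) y.
Proof.
move=> x_C0 y_C01 y_e0.
rewrite /top_ranks /entry_rank /= mem_cat x_C0 /= index_cat x_C0.
rewrite mem_cat (negbTE y_e0) orbF.
case: ifP => y_C0; first by rewrite index_cat y_C0 /=; lia.
move: y_C01; rewrite mem_cat y_C0 /= -cat_cons => y_C1.
have -> : y \in (x.+1 :: C1) ++ e1 by rewrite mem_cat y_C1.
rewrite index_cat y_C1 /=; lia.
Qed.

Definition dyck_word (m1 m2 m3 : nat) : seq letter :=
  Some 0 :: nseq m1 None ++ Some 1 :: nseq m2 None ++ Some 2 :: nseq m3 None.

Section A1C.
Variables a c : nat.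
Local Notation K := [:: a; 1; c].

Lemma is_dyck_shape pi : is_dyck K pi ->
  exists m1 m2 m3, [/\ pi = dyck_word m1 m2 m3, m1 <= a & m1 + m2 <= a.+1].
Proof.
case/and3P => /eqP pi_S _ /allP pi_ranks.
have [n0 [w1 [pi_eq w1_S]]] := pmap_id_cons pi_S.
have [m1 [w2 [w1_eq w2_S]]] := pmap_id_cons w1_S.
have [m2 [w3 [w2_eq w3_S]]] := pmap_id_cons w2_S.
have w3_eq := pmap_id_nil w3_S; set m3 := size w3 in w3_eq.
have rank_ge0 p q : pi = p ++ q -> q != [::] -> (0 <= \sum_(x <- p) rstep K x)%R.
  move=> pi_pq q_nil; rewrite -(start_rank_cat _ _ q) -pi_pq; apply: pi_ranks.
  rewrite mem_iota pi_pq size_cat add0n leq0n -{1}[size p]addn0 ltn_add2l.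
  by rewrite lt0n size_eq0.
have n0_eq0 : n0 = 0.
  by have := rank_ge0 _ _ pi_eq isT; rewrite sum_rstep_nseqW; lia.
move: pi_eq rank_ge0; rewrite n0_eq0 w1_eq w2_eq w3_eq /= => -> rank_ge0.
exists m1, m2, m3; split=> //.
  have := rank_ge0 (Some 0 :: nseq m1 None) _ erefl isT.
  by rewrite big_cons sum_rstep_nseqW /=; lia.
have := rank_ge0 (Some 0 :: nseq m1 None ++ Some 1 :: nseq m2 None)
                 (Some 2 :: nseq m3 None).
rewrite /= -catA big_cons big_cat big_cons !sum_rstep_nseqW /=.
by move/(_ erefl isT); lia.
Qed.

Definition before_last_S largest m1 m2 : tableau :=
  fill_run largest K [:: iota 1 m1.+1; [:: m1.+2]; [::]] m1.+3 (nseq m2 None).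

Lemma sumn_top_ranks_fill largest m1 m2 m3 D0 D1 :
  m1 <= a ->
  before_last_S largest m1 m2 = [:: iota 1 m1.+1 ++ D0; m1.+2 :: D1; [::]] ->
  (m1 + m2).+2 \in (iota 1 m1.+1 ++ D0) ++ m1.+2 :: D1 ->
  sumn (top_ranks (fill largest K (dyck_word m1 m2 m3))) =
  m1 + entry_rank (iota 1 m1.+1 ++ D0) (m1.+2 :: D1) (m1 + m2).+2.
Proof.
move=> le_m1_a before_eq last_mem.
rewrite /dyck_word fillE fill_run_cat fill_run_W_col0 // size_nseq -[2 + m1]/m1.+2.
rewrite fill_run_cons fill_step_S_col1 // fill_run_cat -/(before_last_S _ _ _) before_eq.
rewrite fill_run_cons fill_step_S_col2 // size_nseq !addSn.
have [e0 [e1 [e2 [-> /allP e_ge]]]] :=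
  fill_run_W_extends largest (erefl : size K = 3)
    (iota 1 m1.+1 ++ D0) (m1.+2 :: D1) [:: (m1 + m2).+3] (m1 + m2).+4 m3.
have m1_mem : m1.+1 \in iota 1 m1.+1 by rewrite mem_iota; lia.
rewrite cat1s sumn_top_ranks3 //; last 2 first.
- by rewrite mem_cat m1_mem.
- apply/negP => y_e0; have := e_ge (m1 + m2).+2.
  by rewrite mem_cat y_e0 => /(_ isT); lia.
by rewrite index_cat m1_mem index_iota //; lia.
Qed.

Lemma before_last_S_depth m1 n : m1 + n.+1 <= a.+1 ->
  before_last_S true m1 n.+1 =
  [:: iota 1 m1.+1 ++ iota m1.+4 n; [:: m1.+2; m1.+3]; [::]].
Proof.
move=> le_m.
rewrite /before_last_S fill_run_nseqW fill_step_W_col1 //; last first.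
  by apply/implyP => _; rewrite last_iota /preferred /=; lia.
by rewrite fill_run_W_col0 // size_iota /=; lia.
Qed.

Lemma before_last_S_full largest :
  before_last_S largest a 1 = [:: iota 1 a.+1; [:: a.+2; a.+3]; [::]].
Proof.
by rewrite /before_last_S fill_run_nseqW fill_step_W_col1 // /active /= size_iota ltnn.
Qed.

Lemma before_last_S_bounce1 m1 : m1 < a ->
  before_last_S false m1 1 = [:: iota 1 m1.+1 ++ [:: m1.+3]; [:: m1.+2]; [::]].
Proof.
move=> lt_m1_a.
rewrite /before_last_S fill_run_nseqW fill_step_W_col0 ?cats1 //.
  by rewrite /active size_iota /=.
by apply/implyP => _; rewrite last_iota /preferred /=; lia.
Qed.

Lemma before_last_S_bounce m1 n : m1 < a -> m1 + n.+2 <= a.+1 ->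
  before_last_S false m1 n.+2 =
  [:: iota 1 m1.+1 ++ m1.+3 :: iota (m1 + 5) n; [:: m1.+2; m1.+4]; [::]].
Proof.
move=> lt_m1_a le_m.
rewrite /before_last_S -[n.+2]/(1 + n.+1) nseqD fill_run_cat -/(before_last_S _ _ _).
rewrite before_last_S_bounce1 // fill_run_nseqW fill_step_W_col1 //; last first.
  by apply/implyP => _; rewrite last_cat /preferred /=; lia.
rewrite size_nseq addn1 fill_run_W_col0 ?size_cat ?size_iota /=; try lia.
by rewrite -catA (addnC m1 5).
Qed.

Definition third_top_rank m1 m2 := if m2 is 0 then m1 else m1 + maxn 1 m2.-1.

Lemma top_ranks_dyck_word0 largest m1 m3 : m1 <= a ->
  sumn (top_ranks (fill largest K (dyck_word m1 0 m3))) = m1 + third_top_rank m1 0.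
Proof.
move=> le_m1.
have before_eq :
    before_last_S largest m1 0 = [:: iota 1 m1.+1 ++ [::]; [:: m1.+2]; [::]].
  by rewrite cats0.
rewrite (sumn_top_ranks_fill _ le_m1 before_eq) addn0; last first.
  by rewrite mem_cat mem_head orbT.
by rewrite entry_rank_above // in_nil /= eqxx addn0.
Qed.

Lemma top_ranks_dyck_word_full largest m3 :
  sumn (top_ranks (fill largest K (dyck_word a 1 m3))) = a + third_top_rank a 1.
Proof.
have before_eq :
    before_last_S largest a 1 = [:: iota 1 a.+1 ++ [::]; [:: a.+2; a.+3]; [::]].
  by rewrite cats0 before_last_S_full.
rewrite (sumn_top_ranks_fill _ (leqnn a) before_eq) addn1.
  by rewrite entry_rank_above // in_nil /= ifN_eq ?eqxx //; lia.
by rewrite mem_cat !inE eqxx !orbT.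
Qed.

Lemma depth_dyck_word m1 m2 m3 : m1 <= a -> m1 + m2 <= a.+1 ->
  depth K (dyck_word m1 m2 m3) = m1 + third_top_rank m1 m2.
Proof.
rewrite /depth; case: m2 => [|n] le_m1 le_m2; first exact: top_ranks_dyck_word0.
rewrite (sumn_top_ranks_fill _ le_m1 (before_last_S_depth le_m2)); last first.
  by rewrite !mem_cat !inE mem_iota; case: n {le_m2} => *; lia.
rewrite entry_rank_above; last by lia.
case: n {le_m2} => [|n].
  by rewrite addn1 in_nil /= ltn_eqF // eqxx.
by rewrite mem_iota ifT ?index_iota /=; lia.
Qed.

Lemma bounce_dyck_word m1 m2 m3 : m1 <= a -> m1 + m2 <= a.+1 ->
  bounce K (dyck_word m1 m2 m3) = m1 + third_top_rank m1 m2.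
Proof.
rewrite /bounce; case: m2 => [|[|n]] le_m1 le_m2; first exact: top_ranks_dyck_word0.
  case: (ltnP m1 a) => [lt_m1_a | le_a_m1]; last first.
    by rewrite (_ : m1 = a) ?top_ranks_dyck_word_full //; lia.
  rewrite (sumn_top_ranks_fill _ le_m1 (before_last_S_bounce1 lt_m1_a)); last first.
    by rewrite !mem_cat !inE; lia.
  by rewrite entry_rank_above addn1 // mem_head /= eqxx; lia.
have lt_m1_a : m1 < a by lia.
rewrite (sumn_top_ranks_fill _ le_m1 (before_last_S_bounce lt_m1_a le_m2)); last first.
  by rewrite !mem_cat !inE mem_iota; case: n {le_m2} => *; lia.
rewrite entry_rank_above; last by lia.
case: n {le_m2} => [|n].
  by rewrite addn2 inE gtn_eqF //= ltn_eqF // eqxx; lia.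
have lt_m1_x : m1.+3 < (m1 + n.+3).+2 by lia.
rewrite ifT; last by rewrite inE mem_iota; lia.
by rewrite -cat1s index_cat mem_seq1 gtn_eqF // index_iota /=; lia.
Qed.

End A1C.

Local Open Scope ring_scope.

Theorem proposition5p6 (a c : nat) (ha : (0 < a)%N) (hc : (0 < c)%N) :
  (forall pi : seq letter, is_dyck [:: a; 1%N; c] pi ->
     depth [:: a; 1%N; c] pi = bounce [:: a; 1%N; c] pi) /\
  (forall (R : comNzRingType) (q t : R),
     \sum_(pi <- Dyck_words [:: a; 1%N; c])
        q ^+ area [:: a; 1%N; c] pi * t ^+ depth [:: a; 1%N; c] pi
     = \sum_(pi <- Dyck_words [:: a; 1%N; c])
        q ^+ area [:: a; 1%N; c] pi * t ^+ bounce [:: a; 1%N; c] pi).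
Proof.
have depth_eq_bounce pi : is_dyck [:: a; 1%N; c] pi ->
    depth [:: a; 1%N; c] pi = bounce [:: a; 1%N; c] pi.
  case/is_dyck_shape=> m1 [m2 [m3 [-> le_m1 le_m2]]].
  by rewrite depth_dyck_word // bounce_dyck_word.
split=> // R q t.
by apply: eq_big_seq => pi /mem_Dyck_words /depth_eq_bounce ->.
Qed.
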